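(* Let $T$ be a tiling class with finite local complexity and $\mathcal N$ a regular sub-almost-groupoid of $\mathcal M_{II}$. Then for any unit $u\in\mathcal M_{II}^0$ there is a finite subset $\{c_i\}_i\subset\mathcal M_{II}$ such that $U_u$ is the disjoint union $\dot\bigcup_i U_{L(c_i)}$ and $U_{R(c_i)}\subset\Omega_{\mathcal N}$ for all $i$.
   Context: A $d$-dimensional tiling is a countable family of bounded closed subsets of $\mathbb R^d$ (tiles, closures of interiors, finitely many decorations) covering $\mathbb R^d$ and overlapping only at boundaries, up to translation; finite local complexity: finitely many classes of pairs of touching tiles (so the hull is compact). $\mathcal M_{II}$: doubly pointed pattern classes $M_{xy}$; $M_{x_1x_2}\preceq N_{y_1y_2}$ if $N$ contains a translate of $M$ with $x_i$ on $y_i$; $c\vdash c'$ if some $L_{z_1z_2}$ and tile $z$ of $L$ satisfy $c\preceq L_{z_1z}$, $c'\preceq L_{zz_2}$, $cc'$ the minimal such; $(M_{xy})^{-1}=M_{yx}$; units $M_{xx}$ (set $\mathcal M_{II}^0$); $L(c)=cc^{-1}$, $R(c)=c^{-1}c$. A sub-almost-groupoid is a subset closed under inverses and products of composable elements. Hull $\Omega$: completion of the pointed tilings $T_x$ in the tiling metric $d(\omega,\omega')=e^{-\sup\{r:M_r(\omega)=M_r(\omega')\}}$; $u\preceq\omega$ if $u$ occurs at $\omega$'s pointed tile, $U_u=\{\omega:u\preceq\omega\}$; for $L(c)\preceq\omega$, $\omega\cdot c$ is $\omega$ with pointer moved along $c$. $\Omega_{\mathcal N}=\bigcup_{c\in\mathcal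 N}U_{R(c)}$; $\mathcal N$ is regular if for every $\omega\in\Omega$ there is $c\in\mathcal M_{II}$ with $L(c)\preceq\omega$ and $\omega\cdot c\in\Omega_{\mathcal N}$. *)

(* Tilings of R^d, R : realType,
   points of R^d are row vectors 'rV[R]_d with their (sup) norm. *)
From HB Require Import structures.
From mathcomp Require Import all_boot all_order all_algebra.
From mathcomp Require Import all_classical all_reals all_analysis.
Set Implicit Arguments. Unset Strict Implicit. Unset Printing Implicit Defensive.
Import Order.TTheory GRing.Theory Num.Theory.
Import numFieldNormedType.Exports.
Local Open Scope classical_set_scope.
Local Open Scope ring_scope.

Section Tilings.
Variables (R : realType) (d : nat).

Definition Point := 'rV[R]_d.

(* A tile: its support (a subset of R^d) together with a decoration label. *)
Definition Tile := (set Point * nat)%type.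

Definition tr (v : Point) (t : Tile) : Tile := ((fun p => p + v) @` t.1, t.2).
Definition trP (v : Point) (M : set Tile) : set Tile := tr v @` M.

Definition is_tiling (W : set Tile) : Prop :=
  countable W /\
  (forall t, W t ->
     bounded_set t.1 /\ closure (interior t.1) = t.1 /\ t.1 !=set0) /\
  (forall p : Point, exists t, W t /\ t.1 p) /\
  (forall t t', W t -> W t' -> t <> t' -> interior t.1 `&` interior t'.1 = set0).

Definition FLC (W : set Tile) : Prop :=
  exists P : set (Tile * Tile), finite_set P /\
    forall t t', W t -> W t' -> t.1 `&` t'.1 !=set0 ->
      exists ab, P ab /\ exists v, t = tr v ab.1 /\ t' = tr v ab.2.

(* doubly pointed patterns (representatives of doubly pointed pattern classes) *)
Record DP := mkDP { pat : set Tile; pt1 : Tile; pt2 : Tile }.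

Definition same_class (c c' : DP) : Prop :=
  exists v, trP v (pat c) = pat c' /\ tr v (pt1 c) = pt1 c' /\ tr v (pt2 c) = pt2 c'.

Definition MII (T : set Tile) (c : DP) : Prop :=
  finite_set (pat c) /\ pat c (pt1 c) /\ pat c (pt2 c) /\
  exists v, trP v (pat c) `<=` T.

Definition is_unit (c : DP) : Prop := pt1 c = pt2 c.

Definition preceq (c c' : DP) : Prop :=
  exists v, trP v (pat c) `<=` pat c' /\ tr v (pt1 c) = pt1 c' /\ tr v (pt2 c) = pt2 c'.

Definition dpinv (c : DP) : DP := mkDP (pat c) (pt2 c) (pt1 c).
Definition Lu (c : DP) : DP := mkDP (pat c) (pt1 c) (pt1 c).
Definition Ru (c : DP) : DP := mkDP (pat c) (pt2 c) (pt2 c).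

Definition composable (T : set Tile) (c c' : DP) : Prop :=
  exists L z, MII T L /\ pat L z /\
    preceq c (mkDP (pat L) (pt1 L) z) /\ preceq c' (mkDP (pat L) z (pt2 L)).

Definition is_product (T : set Tile) (c c' e : DP) : Prop :=
  MII T e /\
  (exists z, pat e z /\
     preceq c (mkDP (pat e) (pt1 e) z) /\ preceq c' (mkDP (pat e) z (pt2 e))) /\
  (forall L z, MII T L -> pat L z ->
     preceq c (mkDP (pat L) (pt1 L) z) -> preceq c' (mkDP (pat L) z (pt2 L)) ->
     preceq e L).

(* N is a sub-almost-groupoid of M_II (N is a set of classes, i.e. saturated
   under same_class) *)
Definition sub_almost_groupoid (T : set Tile) (N : set DP) : Prop :=
  N `<=` MII T /\
  (forall c c', same_class c c' -> N c -> N c') /\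
  (forall c, N c -> N (dpinv c)) /\
  (forall c c' e, N c -> N c' -> composable T c c' -> is_product T c c' e -> N e).

Definition PTiling := (set Tile * Tile)%type.

Definition patch (r : R) (w : PTiling) : set Tile :=
  [set s | w.1 s /\ exists p q, s.1 p /\ w.2.1 q /\ `|p - q| <= r].

Definition same_pointed (M : set Tile) (x : Tile) (M' : set Tile) (x' : Tile) :=
  exists v, trP v M = M' /\ tr v x = x'.

(* The hull Omega (completion of {T_x}): the pointed tilings all of whose
   patches M_r occur as patches M_r(T_x) of T. *)
Definition hull (T : set Tile) : set PTiling :=
  [set w | is_tiling w.1 /\ w.1 w.2 /\
     forall r : R, exists x, T x /\
       same_pointed (patch r w) w.2 (patch r (T, x)) x].

Definition occurs_at (u : DP) (w : PTiling) : Prop :=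
  exists v, trP v (pat u) `<=` w.1 /\ tr v (pt1 u) = w.2.

Definition Uset (T : set Tile) (u : DP) : set PTiling :=
  [set w | hull T w /\ occurs_at u w].

Definition act (c : DP) (w w' : PTiling) : Prop :=
  exists v, trP v (pat c) `<=` w.1 /\ tr v (pt1 c) = w.2 /\
            w'.1 = w.1 /\ w'.2 = tr v (pt2 c).

Definition OmegaN (T : set Tile) (N : set DP) : set PTiling :=
  [set w | exists c, N c /\ Uset T (Ru c) w].

Definition regular (T : set Tile) (N : set DP) : Prop :=
  forall w, hull T w -> exists c w', MII T c /\ occurs_at (Lu c) w /\
     act c w w' /\ OmegaN T N w'.

End Tilings.

(* By finite local complexity there are, for each radius r, only finitely many
   translation classes of pointed patches of radius r: tiles have uniformly
   bounded diameter and inradius, so boundedly many tiles meet a ball, and each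
   of them is reached from the centre tile through a bounded chain of touching
   tiles, i.e. through finitely many combinatorial possibilities.
   Call a tile bad at radius r if u occurs at it inside its r-patch but no
   element of N occurs in that patch. If there were bad tiles at every radius,
   a Koenig argument over the finitely many patch classes would produce nested
   bad patches whose union is a tiling of the hull containing no element of N,
   against regularity. At a radius without bad tiles, the classes of r-patches
   around occurrences of u, each pointed a second time at an occurrence of an
   element of N, give the c_i: they cover U_u, and distinct classes give
   disjoint sets since a patch of T seen in a tiling of the hull is the full
   patch of that tiling. *)

From Pilot Require Import Defs.
From HB Require Import structures.
From mathcomp Require Import all_boot all_order all_algebra.
From mathcomp Require Import all_classical all_reals all_analysis.
From mathcomp Require Import zify.
Set Implicit Arguments. Unset Strict Implicit. Unset Printing Implicit Defensive.
Local Open Scope classical_set_scope.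
Local Open Scope ring_scope.
Import Order.TTheory GRing.Theory Num.Theory.
Import numFieldNormedType.Exports.

Section Translation.
Variables (R : realType) (d : nat).
Local Notation Tile := (Tile R d).
Local Notation Point := (Point R d).
Implicit Types (p q : Point) (t s : Tile) (M : set Tile).

Lemma shiftE (S : set Point) v y : ((fun p => p + v) @` S) y <-> S (y - v).
Proof.
split; first by case=> p Sp <-; rewrite addrK.
by move=> Sy; exists (y - v) => //; rewrite subrK.
Qed.

Lemma shift0 (S : set Point) : (fun p => p + 0) @` S = S.
Proof. by apply/seteqP; split => y; rewrite shiftE subr0. Qed.

Lemma shiftD (S : set Point) a b :
  (fun p => p + a) @` ((fun p => p + b) @` S) = (fun p => p + (b + a)) @` S.
Proof. by apply/seteqP; split => y; rewrite !shiftE opprD addrA addrAC. Qed.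

Lemma tr0 t : tr 0 t = t.
Proof. by case: t => S n; rewrite /tr /= shift0. Qed.

Lemma trD a b t : tr a (tr b t) = tr (b + a) t.
Proof. by rewrite /tr /= shiftD. Qed.

Lemma trK v t : tr (- v) (tr v t) = t.
Proof. by rewrite trD subrr tr0. Qed.

Lemma trNK v t : tr v (tr (- v) t) = t.
Proof. by rewrite trD addNr tr0. Qed.

Lemma trP0 M : trP 0 M = M.
Proof.
apply/seteqP; split => t; first by case=> s Ms <-; rewrite tr0.
by move=> Mt; exists t => //; rewrite tr0.
Qed.

Lemma trPD a b M : trP a (trP b M) = trP (b + a) M.
Proof.
apply/seteqP; split => t.
- by case=> s [s' Ms' <-] <-; exists s' => //; rewrite trD.
- by case=> s Ms <-; exists (tr b s); [exists s|rewrite trD].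
Qed.

Lemma trPK v M : trP (- v) (trP v M) = M.
Proof. by rewrite trPD subrr trP0. Qed.

Lemma trPNK v M : trP v (trP (- v) M) = M.
Proof. by rewrite trPD addNr trP0. Qed.

Lemma trPE v M t : trP v M t <-> M (tr (- v) t).
Proof.
split; first by case=> s Ms <-; rewrite trK.
by move=> Mt; exists (tr (- v) t) => //; rewrite trNK.
Qed.

Lemma mem_trP v M t : M t -> trP v M (tr v t).
Proof. by move=> Mt; exists t. Qed.

Lemma trPS v M M' : M `<=` M' -> trP v M `<=` trP v M'.
Proof. by move=> MM' t [s Ms <-]; exists s => //; apply: MM'. Qed.

Lemma interiorP (S : set Point) p :
  interior S p <-> exists2 e, 0 < e & forall y, `|p - y| < e -> S y.
Proof.
rewrite /interior /= nbhs_ballP; split.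
- by case=> e e0 pS; exists e => // y pye; apply: pS; rewrite -ball_normE.
- by case=> e e0 pS; exists e => //= y; rewrite -ball_normE; apply: pS.
Qed.

Lemma closureP (S : set Point) p :
  closure S p <-> forall e, 0 < e -> exists y, S y /\ `|p - y| < e.
Proof.
split.
- move=> pS e e0; have /pS [y [Sy]] : nbhs p (ball p e) by apply: nbhsx_ballx.
  by rewrite -ball_normE; exists y.
- move=> pS B /nbhs_ballP [e e0 eB]; have [y [Sy pye]] := pS e e0.
  by exists y; split => //; apply: eB; rewrite -ball_normE.
Qed.

Lemma interior_shift (S : set Point) v :
  interior ((fun p => p + v) @` S) = (fun p => p + v) @` interior S.
Proof.
apply/seteqP; split => y.
- move/interiorP => [e e0 yS]; apply/shiftE/interiorP; exists e => // z yz.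
  have /shiftE : ((fun p => p + v) @` S) (z + v).
    by apply: yS; rewrite opprD addrA addrAC.
  by rewrite addrK.
- move/shiftE/interiorP => [e e0 yS]; apply/interiorP; exists e => // z yz.
  by apply/shiftE/yS; rewrite opprB addrA subrK.
Qed.

Lemma closure_shift (S : set Point) v :
  closure ((fun p => p + v) @` S) = (fun p => p + v) @` closure S.
Proof.
apply/seteqP; split => y.
- move/closureP => yS; apply/shiftE/closureP => e e0.
  have [z [/shiftE Sz yz]] := yS e e0; exists (z - v); split => //.
  by rewrite opprB addrA subrK.
- move/shiftE/closureP => yS; apply/closureP => e e0.
  have [z [Sz yz]] := yS e e0; exists (z + v); split; first by exists z.
  by rewrite opprD addrA addrAC.
Qed.

Lemma same_pointed_refl M x : same_pointed M x M x.
Proof. by exists 0; rewrite trP0 tr0. Qed.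

Lemma same_pointed_sym M x M' x' :
  same_pointed M x M' x' -> same_pointed M' x' M x.
Proof. by case=> v [<- <-]; exists (- v); rewrite trPK trK. Qed.

Lemma same_pointed_trans M x M' x' M'' x'' :
  same_pointed M x M' x' -> same_pointed M' x' M'' x'' ->
  same_pointed M x M'' x''.
Proof. by case=> v [<- <-] [v' [<- <-]]; exists (v + v'); rewrite trPD trD. Qed.

End Translation.

Section Tiles.
Variables (R : realType) (d : nat).
Local Notation Tile := (Tile R d).
Local Notation Point := (Point R d).
Implicit Types (p q : Point) (t s x : Tile) (W : set Tile).

Definition is_tile t :=
  bounded_set t.1 /\ closure (interior t.1) = t.1 /\ t.1 !=set0.

Lemma bounded_normP (A : set Point) :
  bounded_set A -> exists M, forall y, A y -> `|y| <= M.
Proof. by case=> M0 [_ AM]; exists (M0 + 1); apply: AM; rewrite ltrDl. Qed.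

Lemma bounded_normI (A : set Point) M :
  (forall y, A y -> `|y| <= M) -> bounded_set A.
Proof.
move=> AM; exists M; split; first by rewrite num_real.
by move=> z Mz y Ay; apply: le_trans (AM _ Ay) (ltW Mz).
Qed.

Lemma is_tile_tr v t : is_tile t -> is_tile (tr v t).
Proof.
case=> [bd [cl [p tp]]]; split; last split.
- have [M tM] := bounded_normP bd.
  apply: (@bounded_normI _ (M + `|v|)) => y /shiftE /tM yM.
  by rewrite -(subrK v y); apply: le_trans (ler_normD _ _) _; rewrite lerD2r.
- by rewrite /= interior_shift closure_shift cl.
- by exists (p + v); exists p.
Qed.

Lemma tiling_is_tile W t : is_tiling W -> W t -> is_tile t.
Proof. by case=> _ [tileW _] /tileW. Qed.

Lemma is_tile_closed t : is_tile t -> closed t.1.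
Proof. by case=> _ [cl _]; rewrite -cl; exact: closed_closure. Qed.

Lemma is_tile_approx t p e : is_tile t -> t.1 p -> 0 < e ->
  exists p', interior t.1 p' /\ `|p - p'| < e.
Proof. by case=> _ [cl _] tp e0; rewrite -cl in tp; move/closureP: tp; apply. Qed.

Lemma is_tile_interior t : is_tile t -> exists p, interior t.1 p.
Proof.
move=> tt; have [_ [_ [p tp]]] := tt.
by have [p' [ip' _]] := is_tile_approx tt tp ltr01; exists p'.
Qed.

Lemma tiling_interior_eq W t t' p : is_tiling W -> W t -> W t' ->
  interior t.1 p -> t'.1 p -> t = t'.
Proof.
move=> tW Wt Wt' ip t'p; apply: contrapT => tt'.
have [_ [_ [_ /(_ _ _ Wt Wt' tt') dis]]] := tW.
have /interiorP [e e0 pe] : interior (interior t.1) p.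
  by move: ip; have := @open_interior _ t.1; rewrite openE; apply.
have [q [iq pq]] := is_tile_approx (tiling_is_tile tW Wt') t'p e0.
suff : (interior t.1 `&` interior t'.1) q by rewrite dis.
by split => //; apply: pe.
Qed.

Lemma tile_tr_rigid t (a b : Point) : is_tile t -> tr a t = tr b t -> a = b.
Proof.
move=> [bd [_ [p tp]]] [Eab].
have [M tM] := bounded_normP bd.
set c := a - b.
have tc y : t.1 y -> t.1 (y + c).
  move=> ty; have /shiftE : ((fun p => p + b) @` t.1) (y + a) by rewrite -Eab; exists y.
  by rewrite /c addrA.
have tcn n : t.1 (p + c *+ n).
  by elim: n => [|n IH]; rewrite ?mulr0n ?addr0 // mulrS addrCA addrC; apply: tc.
apply/eqP; rewrite -subr_eq0 -/c -normr_le0 leNgt; apply/negP => c0.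
set n := (Num.trunc ((M + `|p|) / `|c|)).+1.
have : `|c| *+ n <= M + `|p|.
  rewrite -normrMn -(addKr p (c *+ n)) addrC.
  by apply: le_trans (ler_normD _ _) _; rewrite normrN lerD2r tM.
by rewrite leNgt -mulr_natl -ltr_pdivrMr // truncnS_gt.
Qed.

(* The patch of radius [r] around [x] is defined through interior points: a tile
   of another tiling meeting the same interior point is then the same tile
   (lemma [tiling_interior_eq]), which the closed notion [Defs.patch] does
   not allow. *)
Definition near_tile (r : R) x s :=
  exists p q, interior s.1 p /\ x.1 q /\ `|p - q| < r.

Definition ipatch (r : R) W x := W `&` near_tile r x.

Lemma near_tile_tr r v x s : near_tile r (tr v x) (tr v s) <-> near_tile r x s.
Proof.
split.
- case=> p [q [ip [/shiftE xq pq]]]; rewrite /= interior_shift in ip.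
  move/shiftE: ip => ip; exists (p - v), (q - v); split => //; split => //.
  by rewrite opprB addrA subrK.
- case=> p [q [ip [xq pq]]]; exists (p + v), (q + v); split.
    by rewrite /= interior_shift; exists p.
  by split; [exists q|rewrite opprD addrA addrAC addrK].
Qed.

Lemma near_tile_le r r' x s : r <= r' -> near_tile r x s -> near_tile r' x s.
Proof.
by move=> rr' [p [q [ip [xq pq]]]]; exists p, q; do 2!split => //; apply: lt_le_trans rr'.
Qed.

Lemma ipatch_sub r W x : ipatch r W x `<=` W.
Proof. by move=> s []. Qed.

Lemma ipatch_tr r v W x : ipatch r (trP v W) (tr v x) = trP v (ipatch r W x).
Proof.
apply/seteqP; split => s.
- case=> /trPE Ws xs; apply/trPE; split => //.
  by rewrite -(trNK v s) near_tile_tr in xs.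
- by case=> s' [Ws' xs'] <-; split; [exists s'|rewrite near_tile_tr].
Qed.

Lemma ipatch_le r r' W W' x :
  r <= r' -> W `<=` W' -> ipatch r W x `<=` ipatch r' W' x.
Proof. by move=> rr' WW' s [Ws xs]; split; [apply: WW'|apply: near_tile_le xs]. Qed.

Lemma ipatch_id r r' W x : r <= r' -> ipatch r (ipatch r' W x) x = ipatch r W x.
Proof.
move=> rr'; apply/seteqP; split => s; first by case=> -[].
by case=> Ws xs; do 2!split => //; apply: near_tile_le xs.
Qed.

Lemma ipatch_self r W x : 0 < r -> is_tile x -> W x -> ipatch r W x x.
Proof.
move=> r0 xt Wx; split => //; have [p ip] := is_tile_interior xt.
by exists p, p; do 2!split => //; [apply: interior_subset|rewrite subrr normr0].
Qed.

Lemma ipatch_between r W V x :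
  ipatch r W x `<=` V -> V `<=` W -> ipatch r V x = ipatch r W x.
Proof.
move=> WV VW; apply/seteqP; split => s; first by case=> Vs xs; split => //; apply: VW.
by move=> Ws; split; [apply: WV|case: Ws].
Qed.

Lemma same_pointed_ipatch_le r r' W x W' x' : r <= r' ->
  same_pointed (ipatch r' W x) x (ipatch r' W' x') x' ->
  same_pointed (ipatch r W x) x (ipatch r W' x') x'.
Proof.
move=> rr' [v [E1 E2]]; exists v; split => //.
by rewrite -(ipatch_id _ _ rr') -ipatch_tr E1 E2 ipatch_id.
Qed.

End Tiles.

Section SeqBounds.
Variable R : realType.

Lemma seq_upper_bound (A : eqType) (l : seq A) (Q : A -> R -> Prop) :
  (forall a D D', D <= D' -> Q a D -> Q a D') ->
  (forall a, a \in l -> exists D, Q a D) -> exists D, forall a, a \in l -> Q a D.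
Proof.
move=> Qmono; elim: l => [|b l IH] lQ; first by exists 0.
have [D1 QD1] := lQ b (mem_head _ _).
have [D2 QD2] : exists D, forall a, a \in l -> Q a D.
  by apply: IH => a al; apply: lQ; rewrite inE al orbT.
exists (Num.max D1 D2) => a; rewrite inE => /orP [/eqP ->|al].
  by apply: Qmono QD1; rewrite le_max lexx.
by apply: Qmono (QD2 _ al); rewrite le_max lexx orbT.
Qed.

Lemma seq_pos_lower_bound (A : eqType) (l : seq A) (Q : A -> R -> Prop) :
  (forall a D D', 0 < D' -> D' <= D -> Q a D -> Q a D') ->
  (forall a, a \in l -> exists2 D, 0 < D & Q a D) ->
  exists2 D, 0 < D & forall a, a \in l -> Q a D.
Proof.
move=> Qmono; elim: l => [|b l IH] lQ; first by exists 1.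
have [D1 D10 QD1] := lQ b (mem_head _ _).
have [D2 D20 QD2] : exists2 D, 0 < D & forall a, a \in l -> Q a D.
  by apply: IH => a al; apply: lQ; rewrite inE al orbT.
have D0 : 0 < Num.min D1 D2 by rewrite lt_min D10 D20.
exists (Num.min D1 D2) => // a; rewrite inE => /orP [/eqP ->|al].
  by apply: Qmono QD1; rewrite ?ge_min ?lexx.
by apply: Qmono (QD2 _ al); rewrite ?ge_min ?lexx ?orbT.
Qed.

End SeqBounds.

Section Coordinates.
Variables (R : realType) (d : nat).
Local Notation Point := (Point R d).

Lemma norm_coord_le (x : Point) i : `|x 0 i| <= `|x|.
Proof.
have : mx_norm x <= `|x| by [].
by rewrite mx_normrE => /bigmax_leP [_ /(_ (0, i) isT)].
Qed.

Lemma norm_lt_coord (x : Point) e : 0 < e -> (forall i, `|x 0 i| < e) -> `|x| < e.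
Proof.
move=> e0 xe; rewrite (_ : `|x| = mx_norm x) // mx_normrE.
by apply/bigmax_ltP; split => // -[i j] _ /=; rewrite (ord1 i); apply: xe.
Qed.

End Coordinates.

Section FiniteLocalComplexity.
Variables (R : realType) (d : nat).
Local Notation Tile := (Tile R d).
Local Notation Point := (Point R d).
Variable T : set Tile.
Hypothesis hT : is_tiling T.
Hypothesis hF : FLC T.

Definition touch (t t' : Tile) := (t.1 `&` t'.1) !=set0.

Lemma touch_refl t : T t -> touch t t.
Proof. by move=> /(tiling_is_tile hT) [_ [_ [p tp]]]; exists p. Qed.

Lemma touching_pairs : exists Pl : seq (Tile * Tile),
  forall t t', T t -> T t' -> touch t t' ->
    exists2 ab, ab \in Pl & exists v, t = tr v ab.1 /\ t' = tr v ab.2.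
Proof.
case: hF => P [/finite_seqP [Pl ->] PT]; exists Pl => t t' Tt Tt' tt'.
by have [ab [Pab abt]] := PT t t' Tt Tt' tt'; exists ab.
Qed.

Lemma tile_shapes : exists sh : seq Tile,
  (forall a, a \in sh -> is_tile a) /\
  (forall t, T t -> exists2 a, a \in sh & exists v, t = tr v a).
Proof.
have [Pl PlT] := touching_pairs.
exists [seq ab.1 | ab <- Pl & `[< exists v, T (tr v ab.1) >]]; split.
  move=> a /mapP [ab]; rewrite mem_filter => /andP [/asboolP [v Tv] _] ->.
  by rewrite -(trK v ab.1); apply/is_tile_tr/(tiling_is_tile hT).
move=> t Tt; have [ab abPl [v [tab _]]] := PlT t t Tt Tt (touch_refl Tt).
exists ab.1; last by exists v.
by apply/map_f; rewrite mem_filter abPl andbT; apply/asboolP; exists v; rewrite -tab.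
Qed.

Lemma tile_diameter_bound : exists D, forall t, T t ->
  forall p p', t.1 p -> t.1 p' -> `|p - p'| <= D.
Proof.
have [sh [shT Tsh]] := tile_shapes.
have [D shD] : exists D, forall a, a \in sh ->
    forall p p', a.1 p -> a.1 p' -> `|p - p'| <= D.
  apply: seq_upper_bound => [a D D' DD' aD p p' ap ap'|a /shT [bd _]].
    exact: le_trans (aD p p' ap ap') DD'.
  have [M aM] := bounded_normP bd; exists (M + M) => p p' ap ap'.
  by apply: le_trans (ler_normB _ _) _; apply: lerD; apply: aM.
exists D => t /Tsh [a ash [v ->]] p p' /shiftE ap /shiftE ap'.
by have := shD a ash _ _ ap ap'; rewrite opprB addrA subrK.
Qed.

Lemma ball_sub_interior (S : set Point) p e :
  (forall y, `|p - y| < e -> S y) -> forall y, `|p - y| < e -> interior S y.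
Proof.
move=> pS y py; apply/interiorP; exists (e - `|p - y|); first by rewrite subr_gt0.
move=> z yz; apply: pS; rewrite -(subrK y p) -addrA.
by apply: le_lt_trans (ler_normD _ _) _; rewrite -ltrBrDl.
Qed.

Lemma tile_inradius_bound : exists2 rho, 0 < rho & forall t, T t ->
  exists c, forall y, `|c - y| < rho -> interior t.1 y.
Proof.
have [sh [shT Tsh]] := tile_shapes.
have [rho rho0 shrho] : exists2 rho, 0 < rho & forall a, a \in sh ->
    exists c, forall y, `|c - y| < rho -> interior a.1 y.
  apply: seq_pos_lower_bound => [a D D' _ D'D [c cD]|a /shT /is_tile_interior [p]].
    by exists c => y cy; apply: cD; apply: lt_le_trans D'D.
  move=> /interiorP [e e0 pe]; exists e => //.
  by exists p; apply: ball_sub_interior.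
exists rho => // t /Tsh [a ash [v ->]].
have [c ac] := shrho a ash; exists (c + v) => y cy.
by rewrite /= interior_shift; apply/shiftE/ac; rewrite opprB addrA.
Qed.

End FiniteLocalComplexity.

Section TilesNearPoint.
Variables (R : realType) (d : nat).
Local Notation Tile := (Tile R d).
Local Notation Point := (Point R d).
Variable T : set Tile.
Hypothesis hT : is_tiling T.
Variables (D rho : R).
Hypothesis hD : forall t, T t -> forall p p', t.1 p -> t.1 p' -> `|p - p'| <= D.
Hypothesis rho_gt0 : 0 < rho.
Hypothesis hrho : forall t, T t -> exists c, forall y, `|c - y| < rho -> interior t.1 y.

Definition tiles_near (q : Point) (R0 : R) :=
  [set t | T t /\ exists p, t.1 p /\ `|p - q| <= R0].

Definition center (t : Tile) : Point :=
  xget 0 [set c | forall y, `|c - y| < rho -> interior t.1 y].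

Lemma centerP t : T t -> forall y, `|center t - y| < rho -> interior t.1 y.
Proof. by move=> Tt; apply: (xgetPex 0 (hrho Tt)). Qed.

Lemma center_in t : T t -> t.1 (center t).
Proof. by move=> Tt; apply: interior_subset; apply: centerP; rewrite // subrr normr0. Qed.

(* A tile of [tiles_near q R0] is encoded by the cell of the lattice
   [q + rho Z^d] containing its center; the corner of that cell lies in the
   interior of the tile, so distinct tiles get distinct cells. *)
Definition cell_bound (R0 : R) : nat := (Num.truncn ((R0 + D) / rho)).+1.

Definition cell_code_type (R0 : R) := {ffun 'I_d -> 'I_((cell_bound R0).*2).+1}.

Definition cell_index (q : Point) (t : Tile) (i : 'I_d) : int :=
  Num.floor ((center t 0 i - q 0 i) / rho).

Definition cell_code (q : Point) (R0 : R) (t : Tile) : cell_code_type R0 :=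
  [ffun i => inord (absz (cell_index q t i + (cell_bound R0)%:Z))].

Definition cell_corner (q : Point) (t : Tile) : Point :=
  \row_i (q 0 i + rho * (cell_index q t i)%:~R).

Lemma cell_index_bound q R0 t i : tiles_near q R0 t ->
  (- (cell_bound R0)%:Z <= cell_index q t i < (cell_bound R0)%:Z)%R.
Proof.
case=> Tt [p [tp pq]].
have cq : `|center t 0 i - q 0 i| <= R0 + D.
  have -> : center t 0 i - q 0 i = (center t - q) 0 i by rewrite !mxE.
  apply: le_trans (norm_coord_le _ _) _; rewrite -(subrK p (center t)) -addrA.
  apply: le_trans (ler_normD _ _) _; rewrite (addrC R0) lerD //.
  exact: hD (center_in Tt) tp.
set X := (center t 0 i - q 0 i) / rho.
have /andP [lX Xl] : - (cell_bound R0)%:R < X < (cell_bound R0)%:R.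
  rewrite -ltr_norml; apply: le_lt_trans (truncnS_gt _).
  by rewrite /X normrM normfV (gtr0_norm rho_gt0) ler_pM2r ?invr_gt0.
rewrite /cell_index -/X; apply/andP; split.
  rewrite -ltzD1 -(ltr_int R) rmorphN /=.
  exact: lt_trans lX (floorD1_gt X).
by rewrite -(ltr_int R); apply: le_lt_trans (floor_le X) Xl.
Qed.

Lemma cell_codeE q R0 t i : tiles_near q R0 t ->
  ((cell_code q R0 t i : nat)%:Z = cell_index q t i + (cell_bound R0)%:Z)%R.
Proof.
move=> tq; have /andP [lb ub] := cell_index_bound i tq.
have ge0 : (0 <= cell_index q t i + (cell_bound R0)%:Z)%R.
  by rewrite -lterBDr sub0r.
rewrite ffunE inordK; first by rewrite gez0_abs.
by rewrite -ltz_nat gez0_abs //; move: ub; rewrite -addnn; lia.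
Qed.

Lemma cell_corner_near q t : T t -> `|center t - cell_corner q t| < rho.
Proof.
move=> Tt; apply: norm_lt_coord => // i; rewrite !mxE.
set X := (center t 0 i - q 0 i) / rho.
have lb : rho * (cell_index q t i)%:~R <= center t 0 i - q 0 i.
  by rewrite mulrC -ler_pdivlMr //; exact: floor_le.
have ub : center t 0 i - q 0 i < rho * (cell_index q t i)%:~R + rho.
  have := floorD1_gt X; rewrite /X ltr_pdivrMr // intrD mulrDl mul1r.
  by rewrite mulrC.
rewrite opprD addrA ger0_norm; last by rewrite subr_ge0.
by rewrite ltrBlDr (addrC rho).
Qed.

Lemma cell_code_inj q R0 t t' : tiles_near q R0 t -> tiles_near q R0 t' ->
  cell_code q R0 t = cell_code q R0 t' -> t = t'.
Proof.
move=> tq t'q Ett'.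
have corner_eq : cell_corner q t = cell_corner q t'.
  apply/rowP => i; rewrite !mxE; congr (_ + rho * _%:~R).
  by apply: (@addIr _ (cell_bound R0)%:Z); rewrite -!cell_codeE // Ett'.
have it := centerP tq.1 (cell_corner_near q tq.1).
have it' := centerP t'q.1 (cell_corner_near q t'q.1).
by rewrite -corner_eq in it'; apply: tiling_interior_eq hT tq.1 t'q.1 it (interior_subset it').
Qed.

Lemma tiles_near_finite q R0 : finite_set (tiles_near q R0).
Proof.
pose coded g := [set t | tiles_near q R0 t /\ cell_code q R0 t = g].
pose dec (g : cell_code_type R0) := xget (set0, 0%N) (coded g).
have decP t : tiles_near q R0 t -> coded (cell_code q R0 t) (dec (cell_code q R0 t)).
  by move=> tq; apply: xgetPex; exists t.
suff -> : tiles_near q R0 = dec @` [set g | exists t, coded g t].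
  exact/finite_image/finite_finset.
apply/seteqP; split => [t tq|_ [_ [t [tq <-]] <-]]; last by case: (decP t tq).
exists (cell_code q R0 t); first by exists t.
by have [t'q Et'] := decP t tq; apply: cell_code_inj t'q tq Et'.
Qed.

End TilesNearPoint.

Section Reach.
Variables (R : realType) (d : nat).
Local Notation Tile := (Tile R d).
Local Notation Point := (Point R d).
Variable T : set Tile.
Hypothesis hT : is_tiling T.
Variables (D rho : R).
Hypothesis hD : forall t, T t -> forall p p', t.1 p -> t.1 p' -> `|p - p'| <= D.
Hypothesis rho_gt0 : 0 < rho.
Hypothesis hrho : forall t, T t -> exists c, forall y, `|c - y| < rho -> interior t.1 y.
Variables (q : Point) (R0 : R) (x0 : Tile).
Hypothesis Tx0 : T x0.
Hypothesis x0q : x0.1 q.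
Hypothesis R0_ge0 : 0 <= R0.

Local Notation near := (tiles_near T q R0).

Fixpoint reach (k : nat) : set Tile :=
  if k is k'.+1 then
    reach k' `|` [set t' | near t' /\ exists2 t, reach k' t & touch t t']
  else [set x0].

Lemma near_x0 : near x0.
Proof. by split => //; exists q; rewrite subrr normr0. Qed.

Lemma reach_sub k : reach k `<=` near.
Proof. by elim: k => [|k IH] t /= => [->|[/IH|[]]] //; exact: near_x0. Qed.

Lemma reach_mono k m : (k <= m)%N -> reach k `<=` reach m.
Proof. by move=> /subnK <-; elim: (m - k)%N => [|j IH] //= t /IH; left. Qed.

Definition reach_codes (k : nat) : {set cell_code_type d D rho R0} :=
  [set g | `[< exists2 t, reach k t & cell_code D rho q R0 t = g >]].

Lemma reach_codes_sub k : reach_codes k \subset reach_codes k.+1.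
Proof.
by apply/fintype.subsetP => g; rewrite !inE => -[t kt <-]; exists t => //; left.
Qed.

Lemma reach_codes_stable k :
  reach_codes k = reach_codes k.+1 -> forall j, reach (k + j) = reach k.
Proof.
move=> Ek; suff Rk : reach k.+1 = reach k.
  by elim=> [|j IH]; rewrite ?addn0 // addnS -Rk /= IH.
apply/seteqP; split; last exact: reach_mono.
move=> t kt; have : cell_code D rho q R0 t \in reach_codes k.+1.
  by rewrite inE; apply/asboolP; exists t.
rewrite -Ek inE => /asboolP [t' k't Ett'].
have <- // := cell_code_inj hT hD rho_gt0 hrho (reach_sub k't) (reach_sub kt) Ett'.
Qed.

Definition reach_steps := #|cell_code_type d D rho R0|.

(* The code sets [reach_codes k] increase strictly until they stabilise, so
   they do so after at most [reach_steps] steps. *)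
Lemma reach_stable m : reach m `<=` reach reach_steps.
Proof.
have [k kN Ek] : exists2 k, (k <= reach_steps)%N & reach_codes k = reach_codes k.+1.
  apply: contrapT => noEk.
  have card_ge k : (k <= reach_steps.+1)%N -> (k <= #|reach_codes k|)%N.
    elim: k => [|k IH] // kN.
    have : reach_codes k \proper reach_codes k.+1.
      rewrite finset.properEneq reach_codes_sub andbT.
      by apply/eqP => Ek; apply: noEk; exists k; rewrite // -ltnS.
    by move/proper_card; have := IH (ltnW kN); lia.
  by have := leq_trans (card_ge _ (leqnn _)) (max_card _); rewrite ltnn.
have [mN|Nm] := leqP m reach_steps; first exact: reach_mono.
by rewrite -(subnKC (ltnW (leq_ltn_trans kN Nm))) reach_codes_stable //; apply: reach_mono.
Qed.

Lemma segment_continuous (w : Point) : continuous (fun l : R => q + l *: w).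
Proof.
move=> x; apply: (@continuousD _ _ _ (fun=> q) (fun l : R => l *: w)).
  exact: cst_continuous.
exact: continuousZr_tmp.
Qed.

Lemma preimage_tiles_closed (f : R -> Point) (S : set Tile) :
  continuous f -> S `<=` near -> closed (\bigcup_(t in S) f @^-1` t.1).
Proof.
move=> fc Snear; apply: closed_bigcup.
  exact: sub_finite_set Snear (tiles_near_finite hT hD rho_gt0 hrho q R0).
move=> t /Snear [Tt _].
exact: (iffLR (continuous_closedP f)) fc _ (is_tile_closed (tiling_is_tile hT Tt)).
Qed.

(* The tiles met by the segment [q, p] lie in [near]; those reached from [x0]
   and the others give two disjoint closed sets covering [0, 1], so by
   connectedness the second one is empty. *)
Lemma reach_all t p : T t -> t.1 p -> `|p - q| <= R0 -> exists k, reach k t.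
Proof.
move=> Tt tp pq.
pose A := [set t | exists k, reach k t].
pose f := fun l : R => q + l *: (p - q).
pose CA := \bigcup_(t in near `&` A) (f @^-1` t.1).
pose CB := \bigcup_(t in near `&` ~` A) (f @^-1` t.1).
have cCA : closed CA by apply: preimage_tiles_closed; [exact: segment_continuous|move=> ? []].
have cCB : closed CB by apply: preimage_tiles_closed; [exact: segment_continuous|move=> ? []].
have CAB : CA `&` CB = set0.
  apply/seteqP; split => // l [[tA [_ [k kA]] fA] [tB [nB AB] fB]].
  by apply: AB; exists k.+1; right; split => //; exists tA => //; exists (f l).
have sepAB : separated CA CB.
  by split; [rewrite -(iffLR (closure_id _) cCA)|rewrite -(iffLR (closure_id _) cCB)].
have covAB : `[0, 1]%classic `<=` CA `|` CB.
  move=> l; rewrite /= in_itv /= => /andP [l0 l1].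
  have [_ [_ [cov _]]] := hT; have [t' [Tt' t'f]] := cov (f l).
  have nt' : near t'.
    split => //; exists (f l); split => //.
    rewrite /f addrAC subrr add0r normrZ ger0_norm //.
    by apply: le_trans pq; rewrite ler_piMl.
  by case: (pselect (A t')) => At'; [left|right]; exists t'.
have [sub|sub] := connected_subset sepAB covAB (@segment_connected _ 0 1).
- have [|tA [_ [k kA]]] := sub 1; first by rewrite /= in_itv /= ler01 lexx.
  rewrite /f /= scale1r addrC subrK => tAp.
  exists k.+1; right; split; first by split => //; exists p.
  by exists tA => //; exists p.
- have CA0 : CA 0.
    by exists x0; [split; [exact: near_x0|exists 0%N]|rewrite /f /= scale0r addr0].
  have CB0 : CB 0 by apply: sub; rewrite /= in_itv /= ler01 lexx.
  by have : (CA `&` CB) 0 by []; rewrite CAB.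
Qed.

End Reach.

Section Candidates.
Variables (R : realType) (d : nat).
Local Notation Tile := (Tile R d).
Variable T : set Tile.
Hypothesis hT : is_tiling T.
Variable Pl : seq (Tile * Tile).
Hypothesis PlT : forall t t', T t -> T t' -> touch t t' ->
  exists2 ab, ab \in Pl & exists v, t = tr v ab.1 /\ t' = tr v ab.2.

Definition cand_step (b : Tile) (ab : Tile * Tile) : Tile :=
  match pselect (exists w, tr w ab.1 = b) with
  | left bab => tr (projT1 (cid bab)) ab.2
  | right _ => b
  end.

(* Up to the translation placing [a], every tile reachable from a copy of [a]
   in [k] touching steps is in [candidates a k]. *)
Fixpoint candidates (a : Tile) (k : nat) : seq Tile :=
  if k is k'.+1 then
    candidates a k' ++ [seq cand_step b ab | b <- candidates a k', ab <- Pl]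
  else [:: a].

Lemma cand_stepE v t t' ab : is_tile ab.1 -> t = tr v ab.1 -> t' = tr v ab.2 ->
  forall w, cand_step (tr w t) ab = tr w t'.
Proof.
move=> ab1 -> -> w; rewrite /cand_step trD; case: pselect => [bab|]; last first.
  by case; exists (v + w).
by case: (cid bab) => w' /= /(tile_tr_rigid ab1) ->; rewrite trD.
Qed.

Lemma reach_candidates q R0 v a : T (tr v a) -> (tr v a).1 q -> 0 <= R0 ->
  forall k, reach T q R0 (tr v a) k `<=` trP v [set` candidates a k].
Proof.
move=> Tx0 x0q R0_ge0; elim=> [|k IH] t /=.
  by move=> ->; apply: mem_trP; rewrite /= inE.
case=> [/IH|[nt' [t0 kt0 t0t']]].
  by apply: trPS => y /=; rewrite mem_cat => ->.
have Tt0 : T t0 by have [] := reach_sub Tx0 x0q R0_ge0 kt0.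
have [ab abPl [w [E1 E2]]] := PlT Tt0 nt'.1 t0t'.
have ab1 : is_tile ab.1.
  by rewrite -(trK w ab.1) -E1; apply/is_tile_tr/(tiling_is_tile hT).
apply/trPE; rewrite /= mem_cat; apply/orP; right.
rewrite -(cand_stepE ab1 E1 E2 (- v)); apply: allpairs_f => //.
by have /trPE := IH _ kt0.
Qed.

End Candidates.

Lemma finite_subsets_seq (A : eqType) (a0 : A) (s : seq A) :
  finite_set [set Y : set A | Y `<=` [set` s]].
Proof.
pose img (g : {set 'I_(size s)}) : set A := [set nth a0 s i | i in [set i | i \in g]].
suff -> : [set Y : set A | Y `<=` [set` s]] = img @` [set: {set 'I_(size s)}].
  exact/finite_image/finite_finset.
apply/seteqP; split => Y; last by case=> g _ <- _ [i _ <-]; exact: mem_nth.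
move=> /= Ys; exists (finset (fun i : 'I_(size s) => `[< Y (nth a0 s i) >])) => //.
apply/seteqP; split => [_ [i /= + <-]|y Yy]; first by rewrite inE => /asboolP.
have ys : y \in s by apply: Ys.
have ilt : (index y s < size s)%N by rewrite index_mem.
exists (Ordinal ilt); last exact: nth_index.
by rewrite /= inE; apply/asboolP; rewrite nth_index.
Qed.

Section FiniteClasses.
Variables (R : realType) (d : nat).
Local Notation Tile := (Tile R d).
Variable T : set Tile.
Hypothesis hT : is_tiling T.
Hypothesis hF : FLC T.

Lemma ipatch_candidates r : exists (Pl : seq (Tile * Tile)) (K : nat),
  forall a v, T (tr v a) -> ipatch r T (tr v a) `<=` trP v [set` candidates Pl a K].
Proof.
have [Pl PlT] := touching_pairs hF.
have [D hD] := tile_diameter_bound hT hF.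
have [rho rho_gt0 hrho] := tile_inradius_bound hT hF.
pose R0 := `|r| + `|D|.
have R0_ge0 : 0 <= R0 by rewrite addr_ge0.
exists Pl, (reach_steps d D rho R0) => a v Tx.
have [_ [_ [q xq]]] := tiling_is_tile hT Tx.
move=> s [Ts [p [p' [ip [xp' pp']]]]].
have sp := interior_subset ip.
have pq : `|p - q| <= R0.
  have pp'r : `|p - p'| <= `|r| := le_trans (ltW pp') (ler_norm r).
  have p'q : `|p' - q| <= `|D| := le_trans (hD _ Tx _ _ xp' xq) (ler_norm D).
  by rewrite -(subrK p' p) -addrA; apply: le_trans (ler_normD _ _) (lerD pp'r p'q).
have [k ks] := reach_all hT hD rho_gt0 hrho Tx xq R0_ge0 Ts sp pq.
have := reach_stable hT hD rho_gt0 hrho Tx xq R0_ge0 ks.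
exact: (reach_candidates hT PlT Tx xq R0_ge0).
Qed.

Lemma ipatch_finite r x : T x -> finite_set (ipatch r T x).
Proof.
have [Pl [K PlK]] := ipatch_candidates r => Tx.
have := PlK x 0; rewrite tr0 => /(_ Tx) /sub_finite_set; apply.
exact/finite_image/finite_seq.
Qed.

(* The pointed class of [ipatch r T x] is determined by the shape [a] of [x]
   and the subset of [candidates Pl a K] forming the patch. *)
Lemma ipatch_classes r : exists xs : seq Tile, (forall x, x \in xs -> T x) /\
  forall x, T x -> exists2 x', x' \in xs &
    same_pointed (ipatch r T x) x (ipatch r T x') x'.
Proof.
have [Pl [K PlK]] := ipatch_candidates r.
have [sh [_ Tsh]] := tile_shapes hT hF.
pose Cs := \bigcup_(a in [set` sh])
   ((fun Y => (a, Y)) @` [set Y : set Tile | Y `<=` [set` candidates Pl a K]]).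
have Cs_fin : finite_set Cs.
  apply: bigcup_finite; first exact: finite_seq.
  by move=> a _; apply/finite_image/finite_subsets_seq/(set0, 0%N).
pose realises (c : Tile * set Tile) x :=
  T x /\ exists v, x = tr v c.1 /\ ipatch r T x = trP v c.2.
pose Real := Cs `&` [set c | exists x, realises c x].
pose rep c := xget (set0, 0%N) (realises c).
have repP c : Real c -> realises c (rep c) by move=> [_ ex]; apply: xgetPex.
have [xs Exs] : exists xs : seq Tile, rep @` Real = [set` xs].
  by apply/finite_seqP/finite_image/finite_setIl.
exists xs; split.
  move=> x xxs; have : (rep @` Real) x by rewrite Exs.
  by case=> c /repP [Tc _] <-.
move=> x /[dup] Tx /Tsh [a ash [v xE]].
pose c := (a, trP (- v) (ipatch r T x)).
have Rc : Real c.
  split; last by exists x; split => //; exists v; rewrite trPNK.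
  exists a => //; exists (trP (- v) (ipatch r T x)) => //=.
  by rewrite -(trPK v [set` candidates _ _ _]); apply: trPS; rewrite xE; apply: PlK; rewrite -xE.
have [_ [v' [E1 E2]]] := repP c Rc.
exists (rep c).
  by have : [set` xs] (rep c) by rewrite -Exs; exists c.
exists (v' - v); split; first by rewrite E2 /c /= trPD addrC.
by rewrite E1 xE trD addrC subrK.
Qed.

End FiniteClasses.

Section Hull.
Variables (R : realType) (d : nat).
Local Notation Tile := (Tile R d).
Variable T : set Tile.
Hypothesis hT : is_tiling T.
Implicit Types (W : set Tile) (x : Tile).

Lemma patch_tr (r : R) v W x : Defs.patch r (trP v W, tr v x) = trP v (Defs.patch r (W, x)).
Proof.
apply/seteqP; split => s.
- case=> /trPE Ws [p [q [sp [/shiftE xq pq]]]]; apply/trPE; split => //.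
  exists (p - v), (q - v); split; first by exists p.
  by split => //; rewrite opprB addrA subrK.
- case=> s' [Ws' [p [q [sp [xq pq]]]]] <-; split; first by exists s'.
  exists (p + v), (q + v); split; first by exists p.
  by split; [exists q|rewrite opprD addrA addrAC addrK].
Qed.

Lemma ipatch_sub_patch (n r : R) W x : n <= r -> ipatch n W x `<=` Defs.patch r (W, x).
Proof.
move=> nr s [Ws [p [q [ip [xq pq]]]]]; split => //; exists p, q.
by split; [exact: interior_subset|split => //; apply: le_trans (ltW pq) nr].
Qed.

Lemma patch_sub_ipatch (n r : R) W x : (forall s, W s -> is_tile s) -> r + 1 <= n ->
  Defs.patch r (W, x) `<=` ipatch n W x.
Proof.
move=> Wt rn s [Ws [p [q [sp [xq pq]]]]]; split => //.
have [p' [ip' pp']] := is_tile_approx (Wt _ Ws) sp ltr01.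
exists p', q; do 2!split => //; rewrite -(subrK p p') -addrA.
apply: le_lt_trans (ler_normD _ _) _; apply: lt_le_trans rn.
by rewrite (addrC r) ltr_leD // distrC.
Qed.

Lemma patch_between (r : R) W V x : Defs.patch r (W, x) `<=` V -> V `<=` W ->
  Defs.patch r (V, x) = Defs.patch r (W, x).
Proof.
move=> WV VW; apply/seteqP; split => s; first by case=> Vs xs; split => //; apply: VW.
by move=> Ws; split; [apply: WV|case: Ws].
Qed.

Lemma hull_ipatch (w : PTiling R d) (n : R) : hull T w ->
  exists2 x, T x & same_pointed (ipatch n w.1 w.2) w.2 (ipatch n T x) x.
Proof.
case: w => W X [_ [_ /(_ n) [x [Tx [v [E1 E2]]]]]] /=.
have patch_ipatch (V : set Tile) (Y : Tile) :
    ipatch n (Defs.patch n (V, Y)) Y = ipatch n V Y.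
  by apply: ipatch_between; [apply: ipatch_sub_patch|move=> s []].
by exists x => //; exists v; rewrite -patch_ipatch -ipatch_tr E1 E2 patch_ipatch.
Qed.

(* Since [T] covers space, a translate of a patch of [T] sitting in another
   tiling [W] is the whole patch of [W] at that place: a tile of [W] near the
   pointer shares an interior point with a tile of the translated patch. *)
Lemma ipatch_occurrenceE (W : set Tile) (n : R) x X v : is_tiling W ->
  trP v (ipatch n T x) `<=` W -> tr v x = X -> trP v (ipatch n T x) = ipatch n W X.
Proof.
move=> hW sub E; apply/seteqP; split => s.
  move=> vs; split; first exact: sub.
  by case: vs => t [_ nt] <-; rewrite -E near_tile_tr.
case=> Ws [p [q [ip [Xq pq]]]].
have [e1 e10 pe1] := iffLR (interiorP _ _) ip.
pose e := Num.min e1 (n - `|p - q|).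
have e0 : 0 < e by rewrite lt_min e10 subr_gt0.
have [_ [_ [cov _]]] := hT; have [t [Tt tp]] := cov (p - v).
have [p' [ip' pp']] := is_tile_approx (tiling_is_tile hT Tt) tp e0.
have pp'e1 : `|p - v - p'| < e1 by apply: lt_le_trans pp' _; rewrite ge_min lexx.
have pp'n : `|p - v - p'| < n - `|p - q|.
  by apply: lt_le_trans pp' _; rewrite ge_min lexx orbT.
have xt : ipatch n T x t.
  split => //; exists p', (q - v); split => //; split.
    by move: Xq; rewrite -E => /shiftE.
  have -> : p' - (q - v) = (p' - (p - v)) + (p - q).
    by rewrite !opprB -addrA [_ + (p - q)]addrA subrK.
  by apply: le_lt_trans (ler_normD _ _) _; rewrite -ltrBrDr distrC.
have it : interior (tr v t).1 (p' + v) by rewrite /= interior_shift; exists p'.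
have sp' : s.1 (p' + v) by apply: pe1; rewrite opprD addrA addrAC.
have <- := tiling_interior_eq hW (sub _ (mem_trP v xt)) Ws it sp'.
exact: mem_trP.
Qed.

Lemma MII_is_tile (c : DP R d) s : MII T c -> pat c s -> is_tile s.
Proof.
case=> _ [_ [_ [v cT]]] cs; rewrite -(trK v s).
by apply/is_tile_tr/(tiling_is_tile hT)/cT; exists s.
Qed.

Lemma occurrence_in_ipatch (u : DP R d) : MII T u -> exists n0 : nat,
  forall n : R, n0%:R <= n -> forall W X v,
    trP v (pat u) `<=` W -> tr v (pt1 u) = X -> trP v (pat u) `<=` ipatch n W X.
Proof.
move=> hu; have [/finite_seqP [l El] [u1 _]] := hu.
have [_ [_ [q uq]]] := MII_is_tile hu u1.
have [m um] : exists m, forall s, s \in l -> near_tile m (pt1 u) s.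
  apply: seq_upper_bound => [s D D' DD'|s sl]; first exact: near_tile_le.
  have [p ip] : exists p, interior s.1 p.
    by apply/is_tile_interior/(MII_is_tile hu); rewrite El.
  by exists (`|p - q| + 1), p, q; rewrite ltrDl.
exists (Num.truncn m).+1 => n mn W X v sub <- _ [s us <-].
split; first by apply: sub; exists s.
rewrite near_tile_tr; apply: near_tile_le (um s _); last by move: us; rewrite El.
by apply: le_trans mn; exact/ltW/truncnS_gt.
Qed.

End Hull.

Lemma pigeonhole_cofinal (A : eqType) (l : seq A) (Q : A -> nat -> Prop) :
  (forall a m m', (m' <= m)%N -> Q a m -> Q a m') ->
  (forall m, exists2 a, a \in l & Q a m) -> exists2 a, a \in l & forall m, Q a m.
Proof.
elim: l Q => [|b l IH] Q Qanti lQ; first by have [a] := lQ 0%N.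
have [Qb|/existsNP [m0 nQb]] := pselect (forall m, Q b m).
  by exists b => //; exact: mem_head.
have [a al Qa] : exists2 a, a \in l & forall m, Q a (m0 + m)%N.
  apply: (IH (fun a m => Q a (m0 + m)%N)).
    by move=> a m m' m'm; apply: Qanti; rewrite leq_add2l.
  move=> m; have [a] := lQ (m0 + m)%N; rewrite inE => /orP [/eqP ->|al] Qa.
    by case: nQb; apply: Qanti Qa; exact: leq_addr.
  by exists a.
exists a; first by rewrite inE al orbT.
by move=> m; apply: Qanti (Qa m); exact: leq_addl.
Qed.

Section Occurrences.
Variables (R : realType) (d : nat).
Local Notation Tile := (Tile R d).
Implicit Types (P : set Tile) (x : Tile).

Definition occurs_in (c : DP R d) P x :=
  exists v, trP v (pat c) `<=` P /\ tr v (pt1 c) = x.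

Definition some_occurs_in (N : set (DP R d)) P :=
  exists c v, N c /\ trP v (pat c) `<=` P.

Lemma occurs_in_tr c v P x : occurs_in c P x -> occurs_in c (trP v P) (tr v x).
Proof.
case=> v' [sub <-]; exists (v' + v).
by rewrite -trPD -trD; split => //; apply: trPS.
Qed.

Lemma some_occurs_in_tr N v P : some_occurs_in N P -> some_occurs_in N (trP v P).
Proof.
by case=> c [v' [Nc sub]]; exists c, (v' + v); split => //; rewrite -trPD; apply: trPS.
Qed.

Lemma some_occurs_in_sub N P P' : P `<=` P' -> some_occurs_in N P -> some_occurs_in N P'.
Proof.
by move=> PP' [c [v [Nc sub]]]; exists c, v; split => //; apply: subset_trans PP'.
Qed.

End Occurrences.

Section Compactness.
Variables (R : realType) (d : nat).
Local Notation Tile := (Tile R d).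
Local Notation Point := (Point R d).
Variable T : set Tile.
Hypothesis hT : is_tiling T.
Hypothesis hF : FLC T.
Variable N : set (DP R d).
Variable u : DP R d.
Variable n0 : nat.
Hypothesis u_in_ipatch : forall n : R, n0%:R <= n ->
  forall W X v, trP v (pat u) `<=` W -> tr v (pt1 u) = X -> trP v (pat u) `<=` ipatch n W X.

Definition radius (n : nat) : R := (n0 + n).+1%:R.

Lemma radius_gt0 n : 0 < radius n. Proof. by rewrite ltr0n. Qed.

Lemma radius_ge n : n0%:R <= radius n.
Proof. by rewrite ler_nat; apply/leqW/leq_addr. Qed.

Lemma radius_le n m : (n <= m)%N -> radius n <= radius m.
Proof. by move=> nm; rewrite ler_nat ltnS leq_add2l. Qed.

Lemma radius_unbounded (x : R) : exists n, x < radius n.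
Proof.
exists (Num.truncn x); apply: lt_le_trans (truncnS_gt _) _.
by rewrite ler_nat ltnS leq_addl.
Qed.

Definition rpatch n x := ipatch (radius n) T x.

Definition bad n x :=
  [/\ T x, occurs_in u (rpatch n x) x & ~ some_occurs_in N (rpatch n x)].

Lemma bad_class n x y : T y ->
  same_pointed (rpatch n x) x (rpatch n y) y -> bad n x -> bad n y.
Proof.
move=> Ty [v [E1 E2]] [Tx ux nx]; split => //; first by rewrite -E1 -E2; exact: occurs_in_tr.
by move=> cy; apply: nx; rewrite -(trPK v (rpatch n x)) E1; apply: some_occurs_in_tr.
Qed.

Lemma bad_le n m x : (n <= m)%N -> bad m x -> bad n x.
Proof.
move=> nm [Tx [v [sub E]] nx]; split => //.
  exists v; split => //; apply: (u_in_ipatch (radius_ge n)) E.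
  by apply: subset_trans sub _; exact: ipatch_sub.
by move=> cn; apply/nx/(some_occurs_in_sub _ cn)/ipatch_le => //; exact: radius_le.
Qed.

Lemma same_pointed_rpatch_le n m x y : (n <= m)%N ->
  same_pointed (rpatch m x) x (rpatch m y) y -> same_pointed (rpatch n x) x (rpatch n y) y.
Proof. by move=> nm; apply/same_pointed_ipatch_le/radius_le. Qed.

Definition extendable n x := bad n x /\ forall m, (n <= m)%N ->
  exists2 y, bad m y & same_pointed (rpatch n x) x (rpatch n y) y.

Lemma extendable0 : (forall m, exists x, bad m x) -> exists x, extendable 0 x.
Proof.
move=> bad_m; have [xs [xsT xsC]] := ipatch_classes hT hF (radius 0).
pose Q x m := bad 0 x /\ exists2 y, bad m y & same_pointed (rpatch 0 x) x (rpatch 0 y) y.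
have [x _ Qx] : exists2 x, x \in xs & forall m, Q x m.
  apply: pigeonhole_cofinal => [x m m' m'm [x0 [y ym xy]]|m].
    by split => //; exists y => //; apply: bad_le ym.
  have [z zm] := bad_m m; have z0 : bad 0 z by apply: bad_le zm.
  have [Tz _ _] := z0; have [x xxs zx] := xsC z Tz; exists x => //.
  by split; [exact: bad_class (xsT _ xxs) zx z0|exists z => //; apply: same_pointed_sym].
by exists x; split; [case: (Qx 0%N)|move=> m _; case: (Qx m)].
Qed.

Lemma extendableS n x : extendable n x -> exists2 y, extendable n.+1 y &
  same_pointed (rpatch n x) x (rpatch n y) y.
Proof.
move=> [xn ext]; have [xs [xsT xsC]] := ipatch_classes hT hF (radius n.+1).
pose Q x' k := [/\ bad n.+1 x', same_pointed (rpatch n x) x (rpatch n x') x' &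
  exists2 y, bad (n.+1 + k) y & same_pointed (rpatch n.+1 x') x' (rpatch n.+1 y) y].
have [x' _ Qx'] : exists2 x', x' \in xs & forall k, Q x' k.
  apply: pigeonhole_cofinal => [x' k k' k'k [x'n xx' [y yk x'y]]|k].
    by split => //; exists y => //; apply: bad_le yk; rewrite leq_add2l.
  have [z zk xz] := ext (n.+1 + k)%N (leqW (leq_addr _ _)).
  have zn : bad n.+1 z by apply: bad_le zk; exact: leq_addr.
  have [Tz _ _] := zn; have [x' x'xs zx'] := xsC z Tz; exists x' => //; split.
  - exact: bad_class (xsT _ x'xs) zx' zn.
  - by apply: same_pointed_trans xz _; apply: same_pointed_rpatch_le zx'.
  - by exists z => //; apply: same_pointed_sym.
have [x'n xx' _] := Qx' 0%N; exists x' => //; split => // m nm.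
by case: (Qx' (m - n.+1)%N) => _ _ [y]; rewrite subnKC //; exists y.
Qed.

Section Limit.
Variable next : nat -> Tile -> Tile * Point.
Hypothesis nextP : forall n x, extendable n x ->
  [/\ extendable n.+1 (next n x).1,
    trP (next n x).2 (rpatch n x) = rpatch n (next n x).1 &
    tr (next n x).2 x = (next n x).1].
Variable x0 : Tile.
Hypothesis x0_ext : extendable 0 x0.

Fixpoint chain (n : nat) : Tile * Point :=
  if n is n'.+1 then
    let: (y, a) := chain n' in ((next n' y).1, a - (next n' y).2)
  else (x0, 0).

Lemma chainP n : extendable n (chain n).1 /\ tr (chain n).2 (chain n).1 = x0.
Proof.
elim: n => [|n]; first by rewrite /= tr0.
rewrite /=; case: (chain n) => y a /= yE; rewrite -yE.2.
have [yn' _ Ey] := nextP yE.1.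
by split => //; rewrite -Ey trD addrC subrK.
Qed.

Definition layer n := trP (chain n).2 (rpatch n (chain n).1).

Lemma layer_sub_T n s : layer n s -> exists2 t, T t & s = tr (chain n).2 t.
Proof. by case=> t [Tt _] <-; exists t. Qed.

Lemma layerS n : ipatch (radius n) (layer n.+1) x0 = layer n.
Proof.
have [yn _] := chainP n; have [_ <-] := chainP n.+1.
rewrite /layer ipatch_tr /rpatch ipatch_id ?radius_le //= -/(rpatch n _).
case: (chain n) yn => y a /= yn; have [_ <- _] := nextP yn.
by rewrite trPD addrC subrK.
Qed.

Lemma layer_mono n m : (n <= m)%N -> layer n `<=` layer m.
Proof.
move=> /subnK <-; elim: (m - n)%N => [|k IH] //.
by apply: subset_trans IH _; rewrite addSn -layerS; exact: ipatch_sub.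
Qed.

Lemma ipatch_layer n m : (n <= m)%N -> ipatch (radius n) (layer m) x0 = layer n.
Proof.
move=> /subnK <-; elim: (m - n)%N => [|k IH].
  by rewrite add0n -{1}layerS ipatch_id ?radius_le // layerS.
by rewrite addSn -(ipatch_id _ _ (radius_le (leq_addl k n))) layerS IH.
Qed.

Definition limit := \bigcup_n layer n.

Lemma ipatch_limit n : ipatch (radius n) limit x0 = layer n.
Proof.
apply/seteqP; split => [s [[m _ ms] ns]|s ns].
  have [mn|nm] := leqP m n; first exact: layer_mono mn _ ms.
  by rewrite -(ipatch_layer (ltnW nm)).
by split; [exists n|move: ns; rewrite -layerS => -[]].
Qed.

Lemma limit_is_tile s : limit s -> is_tile s.
Proof.
by case=> n _ /layer_sub_T [t Tt ->]; apply/is_tile_tr/(tiling_is_tile hT).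
Qed.

Lemma x0_T : T x0.
Proof. by case: x0_ext => -[]. Qed.

Lemma limit_covers p : exists t, limit t /\ t.1 p.
Proof.
have [_ [_ [q x0q]]] := tiling_is_tile hT x0_T.
have [n pqn] := radius_unbounded (`|p - q| + 1).
have [_ [_ [cov _]]] := hT; have [t [Tt tp]] := cov (p - (chain n).2).
have [p' [ip' pp']] := is_tile_approx (tiling_is_tile hT Tt) tp ltr01.
have [_ x0E] := chainP n.
have nt : rpatch n (chain n).1 t.
  split => //; exists p', (q - (chain n).2); split => //; split.
    by move: x0q; rewrite -x0E => /shiftE.
  have -> : p' - (q - (chain n).2) = (p' - (p - (chain n).2)) + (p - q).
    by rewrite !opprB -addrA [_ + (p - q)]addrA subrK.
  apply: le_lt_trans (ler_normD _ _) _; apply: lt_trans pqn.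
  by rewrite addrC ltrD2l distrC.
by exists (tr (chain n).2 t); split; [exists n => //; exists t|apply/shiftE].
Qed.

Lemma limit_tiling : is_tiling limit.
Proof.
split; [|split; [by move=> t /limit_is_tile|split; first exact: limit_covers]].
  apply: bigcup_countable; first exact: card_lexx.
  move=> n _; apply/finite_set_countable/finite_image/(ipatch_finite hT hF).
  by case: (chainP n) => -[[]].
move=> s s' [n _ ns] [m _ ms'] ss'.
have [t Tt sE] := layer_sub_T (layer_mono (leq_maxl n m) ns).
have [t' Tt' s'E] := layer_sub_T (layer_mono (leq_maxr n m) ms').
have tt' : t <> t' by move=> tt'; apply: ss'; rewrite sE s'E tt'.
have [_ [_ [_ /(_ _ _ Tt Tt' tt') dis]]] := hT.
apply/seteqP; split => // z []; rewrite sE s'E /= !interior_shift => /shiftE zt /shiftE zt'.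
by have : (interior t.1 `&` interior t'.1) (z - (chain (maxn n m)).2) by []; rewrite dis.
Qed.

Lemma limit_hull : hull T (limit, x0).
Proof.
split; first exact: limit_tiling.
split.
  exists 0%N => //; rewrite /layer /= trP0; apply: ipatch_self.
  - exact: radius_gt0.
  - exact: tiling_is_tile hT x0_T.
  - exact: x0_T.
move=> r; have [n rn] := radius_unbounded (`|r| + 1).
have [[[Tyn _ _] _] x0E] := chainP n.
exists (chain n).1; split => //.
have rn' : r + 1 <= radius n by apply/ltW/(le_lt_trans _ rn); rewrite lerD2r ler_norm.
have E1 : Defs.patch r (limit, x0) = Defs.patch r (layer n, x0).
  apply/esym/patch_between; last by move=> s ns; exists n.
  by rewrite -ipatch_limit; apply: patch_sub_ipatch rn' => s /limit_is_tile.
have E2 : Defs.patch r (rpatch n (chain n).1, (chain n).1) = Defs.patch r (T, (chain n).1).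
  apply: patch_between; last exact: ipatch_sub.
  by apply: patch_sub_ipatch rn' => s /(tiling_is_tile hT).
exists (- (chain n).2); split; last by rewrite -x0E trK.
by rewrite E1 /layer -x0E patch_tr trPK E2.
Qed.

Lemma limit_finite_sub (A : set Tile) : finite_set A -> A `<=` limit ->
  exists n, A `<=` layer n.
Proof.
move=> /finite_seqP [l ->]; elim: l => [|b l IH] sub; first by exists 0%N.
have [n ln] : exists n, [set` l] `<=` layer n.
  by apply: IH => s sl; apply: sub; rewrite /= inE sl orbT.
have [m _ bm] : limit b by apply: sub; rewrite /= inE eqxx.
exists (maxn n m) => s; rewrite /= inE => /orP [/eqP ->|sl].
  exact: layer_mono (leq_maxr n m) _ bm.
exact: layer_mono (leq_maxl n m) _ (ln _ sl).
Qed.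

Lemma limit_not_regular : N `<=` MII T -> ~ regular T N.
Proof.
move=> NM /(_ _ limit_hull) [c [w' [_ [_ [[v [_ [_ [w'E _]]]] [c' [Nc' [_ [v' [sub _]]]]]]]]]].
rewrite w'E /= in sub.
have [K sub'] : exists K, trP v' (pat c') `<=` layer K.
  by apply: limit_finite_sub sub; apply/finite_image; case: (NM _ Nc').
have [[[_ _ nK] _] _] := chainP K; apply: nK.
by rewrite -(trPK (chain K).2 (rpatch _ _)); apply: some_occurs_in_tr; exists c', v'.
Qed.

End Limit.

Lemma good_radius : N `<=` MII T -> regular T N -> exists r : R,
  [/\ 0 < r, n0%:R <= r & forall x, T x ->
      occurs_in u (ipatch r T x) x -> some_occurs_in N (ipatch r T x)].
Proof.
move=> NM hreg; suff [n nbad] : exists n, forall x, ~ bad n x.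
  exists (radius n); split; [exact: radius_gt0|exact: radius_ge|] => x Tx ux.
  by apply: contrapT => nx; apply: (nbad x).
apply: contrapT => nobad.
have [x0 x0_ext] : exists x, extendable 0 x.
  apply: extendable0 => m; apply: contrapT => nbm; apply: nobad.
  by exists m => x bx; apply: nbm; exists x.
pose step (nx : nat * Tile) (yv : Tile * Point) := extendable nx.1 nx.2 ->
  [/\ extendable nx.1.+1 yv.1, trP yv.2 (rpatch nx.1 nx.2) = rpatch nx.1 yv.1 &
    tr yv.2 nx.2 = yv.1].
have stepP nx : exists yv, step nx yv.
  case: nx => n x; have [xn|nxn] := pselect (extendable n x); last by exists (x, 0).
  by have [y yn [v [E1 E2]]] := extendableS xn; exists (y, v).
have [next nextP] := choice stepP.
exact: (limit_not_regular (fun n x => nextP (n, x)) x0_ext NM hreg).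
Qed.

End Compactness.

Lemma seq_transversal (A : eqType) (E : A -> A -> Prop) (s : seq A) :
  (forall x, E x x) -> exists l, [/\ {subset l <= s},
    (forall x, x \in s -> exists2 x', x' \in l & E x x') &
    pairwise (fun x y => ~~ `[< E x y >]) l].
Proof.
move=> Erefl; elim: s => [|a s [l [ls sl lE]]]; first by exists [::].
have [[x' x'l ax']|nax] := pselect (exists2 x', x' \in l & E a x').
  exists l; split => // [x /ls xs|x]; first by rewrite inE xs orbT.
  by rewrite inE => /orP [/eqP ->|]; [exists x'|exact: sl].
exists (a :: l); split.
- by move=> x; rewrite !inE => /orP [->|/ls ->]; rewrite ?orbT.
- move=> x; rewrite inE => /orP [/eqP ->|/sl [x' x'l xx']]; first by exists a; rewrite ?mem_head.
  by exists x' => //; rewrite inE x'l orbT.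
- rewrite /= lE andbT; apply/allP => x xl; apply/negP => /asboolP ax.
  by apply: nax; exists x.
Qed.

Lemma finite_transversal (A : eqType) (E : A -> A -> Prop) (P : A -> Prop) (s : seq A) :
  (forall x, E x x) -> (forall x y, E x y -> E y x) ->
  (forall x y z, E x y -> E y z -> E x z) -> (forall x y, E x y -> P x -> P y) ->
  (forall x, P x -> exists2 x', x' \in s & E x x') ->
  exists (k : nat) (f : 'I_k -> A), [/\ forall i, P (f i),
    forall x, P x -> exists i, E x (f i) & forall i j, E (f i) (f j) -> i = j].
Proof.
move=> Erefl Esym Etrans EP sP.
have [l [ls sl lE]] := seq_transversal [seq x <- s | `[< P x >]] Erefl.
exists (size l), (fun i => tnth (in_tuple l) i); split.
- move=> i; have := mem_tnth i (in_tuple l).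
  by move=> /ls; rewrite mem_filter => /andP [/asboolP].
- move=> x Px; have [x' x's xx'] := sP x Px.
  have [|x'' x''l x'x''] := sl x'; first by rewrite mem_filter x's andbT; apply/asboolP/(EP x).
  have ilt : (index x'' l < size l)%N by rewrite index_mem.
  by exists (Ordinal ilt); rewrite (tnth_nth x'') /= nth_index //; apply: Etrans xx' x'x''.
- move=> i j; pose x0 := tnth (in_tuple l) i.
  rewrite (tnth_nth x0 _ i) (tnth_nth x0 _ j) => Eij; apply: val_inj => /=.
  have ltE m n : (m < n < size l)%N -> ~ E (nth x0 l m) (nth x0 l n).
    move=> /andP [mn nl] Emn; move/pairwiseP: lE => /(_ x0 m n).
    rewrite !inE (ltn_trans mn nl) nl mn => /(_ isT isT isT) /negP; apply.
    exact/asboolP.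
  case: (ltngtP i j) => [ij|ji|] //; exfalso.
    by apply: (ltE i j) Eij; rewrite ij ltn_ord.
  by apply: (ltE j i) (Esym _ _ Eij); rewrite ji ltn_ord.
Qed.

Section Partition.
Variables (R : realType) (d : nat).
Local Notation Tile := (Tile R d).
Local Notation Point := (Point R d).
Variable T : set Tile.
Hypothesis hT : is_tiling T.
Hypothesis hF : FLC T.
Variable N : set (DP R d).
Hypothesis NM : N `<=` MII T.
Variables (u : DP R d) (r : R).
Hypothesis r_gt0 : 0 < r.
Hypothesis u_in_ipatch : forall W X v,
  trP v (pat u) `<=` W -> tr v (pt1 u) = X -> trP v (pat u) `<=` ipatch r W X.
Hypothesis good : forall x, T x ->
  occurs_in u (ipatch r T x) x -> some_occurs_in N (ipatch r T x).

Definition patch_dp (x y : Tile) := mkDP (ipatch r T x) x y.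

Lemma MII_patch_dp x y : T x -> ipatch r T x y -> MII T (patch_dp x y).
Proof.
move=> Tx xy; split; first exact: ipatch_finite.
split; first exact/ipatch_self/Tx/(tiling_is_tile hT).
by split => //; exists 0; rewrite trP0; exact: ipatch_sub.
Qed.

Lemma occurs_atE (w : PTiling R d) :
  occurs_at u w <-> occurs_in u (ipatch r w.1 w.2) w.2.
Proof.
split => -[v [sub E]]; exists v; split => //; last exact: subset_trans sub (@ipatch_sub _ _ _ _ _).
exact: u_in_ipatch.
Qed.

Lemma Uset_Lu_patch_dp x y w : Uset T (Lu (patch_dp x y)) w <->
  hull T w /\ same_pointed (ipatch r T x) x (ipatch r w.1 w.2) w.2.
Proof.
split => -[hw [v [sub E]]]; split => //; exists v => //.
  by split => //; apply: ipatch_occurrenceE sub E; case: hw.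
by rewrite sub; split => //; exact: ipatch_sub.
Qed.

Lemma Uset_Ru_patch_dp x c v : N c -> trP v (pat c) `<=` ipatch r T x ->
  Uset T (Ru (patch_dp x (tr v (pt2 c)))) `<=` OmegaN T N.
Proof.
move=> Nc cx w [hw [v' [sub E]]]; exists c; split => //; split => //.
exists (v + v'); split; last by rewrite -trD.
by rewrite -trPD; apply: subset_trans sub; apply: trPS.
Qed.

Lemma same_pointed_ipatch_T x y :
  same_pointed (ipatch r T x) x (ipatch r T y) y -> T x -> T y.
Proof.
case=> v [E xy] Tx; apply: (@ipatch_sub _ _ r T y).
by rewrite -E -xy; apply/mem_trP/ipatch_self/Tx/(tiling_is_tile hT).
Qed.

Lemma unit_partition : exists (n : nat) (c : 'I_n -> DP R d),
  [/\ forall i, MII T (c i),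
    forall w, Uset T u w <-> exists i, Uset T (Lu (c i)) w,
    forall i j, i <> j -> Uset T (Lu (c i)) `&` Uset T (Lu (c j)) = set0 &
    forall i, Uset T (Ru (c i)) `<=` OmegaN T N].
Proof.
pose P x := T x /\ occurs_in u (ipatch r T x) x.
pose E x y := same_pointed (ipatch r T x) x (ipatch r T y) y.
have [xs [_ xsC]] := ipatch_classes hT hF r.
have EP x y : E x y -> P x -> P y.
  move=> Exy [Tx ux]; split; first exact: same_pointed_ipatch_T Exy Tx.
  by case: Exy ux => v [<- <-]; apply: occurs_in_tr.
have [k [x [Px xP x_inj]]] := finite_transversal (fun x => same_pointed_refl _ x)
  (fun x y => @same_pointed_sym _ _ _ x _ y)
  (fun x y z => @same_pointed_trans _ _ _ x _ y _ z) EP (fun x Px => xsC x Px.1).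
have witness i : exists cv : DP R d * Point,
    N cv.1 /\ trP cv.2 (pat cv.1) `<=` ipatch r T (x i).
  by have [Tx /(good Tx) [c [v cx]]] := Px i; exists (c, v).
have [cv cvP] := choice witness.
exists k, (fun i => patch_dp (x i) (tr (cv i).2 (pt2 (cv i).1))); split.
- move=> i; have [Nc cx] := cvP i; apply: MII_patch_dp; first by case: (Px i).
  by apply/cx/mem_trP; case: (NM Nc) => _ [_ []].
- move=> w; split => [[hw /occurs_atE uw]|[i /Uset_Lu_patch_dp [hw xw]]].
    have [y Ty wy] := hull_ipatch r hw.
    have [|i yx] := xP y; first by split => //; case: wy uw => v [<- <-]; exact: occurs_in_tr.
    exists i; apply/Uset_Lu_patch_dp; split => //.
    exact: same_pointed_sym (same_pointed_trans wy yx).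
  split => //; apply/occurs_atE; case: xw (Px i).2 => v [<- <-].
  exact: occurs_in_tr.
- move=> i j ij; apply/seteqP; split => // w [/Uset_Lu_patch_dp [_ xiw] /Uset_Lu_patch_dp [_ xjw]].
  by case: ij; apply: x_inj; apply: same_pointed_trans xiw (same_pointed_sym xjw).
- by move=> i; case: (cvP i) => Nc cx; exact: Uset_Ru_patch_dp.
Qed.

End Partition.

Unset Implicit Arguments.
Local Close Scope ring_scope.

Theorem mainTheorem12 (R : realType) (d : nat) (T : set (Tile R d))
  (N : set (DP R d)) :
  is_tiling T -> FLC T -> sub_almost_groupoid T N -> regular T N ->
  forall u : DP R d, MII T u -> is_unit u ->
  exists (n : nat) (c : 'I_n -> DP R d),
    (forall i, MII T (c i)) /\
    (forall w, Uset T u w <-> exists i, Uset T (Lu (c i)) w) /\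
    (forall i j, i <> j -> Uset T (Lu (c i)) `&` Uset T (Lu (c j)) = set0) /\
    (forall i, Uset T (Ru (c i)) `<=` OmegaN T N).
Proof.
move=> hT hF [NM _] hreg u hu _.
have [n0 u_in] := occurrence_in_ipatch hT hu.
have [r [r_gt0 r_ge good]] := good_radius hT hF u_in NM hreg.
have [n [c [cM cU cD cR]]] := unit_partition hT hF NM r_gt0 (u_in r r_ge) good.
by exists n, c.
Qed.
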